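(* Let $\mathcal{A} = (V, V_0, V_1, E, v_I)$ be an arena with $n$ vertices and $w \colon E \to -\mathbb{N} \cup \{\mathrm{R}\}$, and let $W$ be the largest absolute value of an integer weight in the image of $w$. If there is a $cap \in \mathbb{N}$ such that Player~$0$ wins $(\mathcal{A}, \mathsf{Recharge}(w, cap))$, then she also wins $(\mathcal{A}, \mathsf{Recharge}(w, 3\cdot(n-1)\cdot W))$, and she wins the latter game with a finite-state strategy of size three.
   Context: An arena $\mathcal{A} = (V, V_0, V_1, E, v_I)$ consists of a finite directed graph $(V,E)$ in which every vertex has at least one outgoing edge, a partition $V = V_0 \uplus V_1$, and an initial vertex $v_I$. A play is an infinite path $v_0 v_1 \cdots$ with $v_0 = v_I$. A strategy for Player~$i$ is a map $\sigma \colon V^* V_i \to V$ with $(v, \sigma(xv)) \in E$; a play is consistent with $\sigma$ if $v_{n+1} = \sigma(v_0\cdots v_n)$ whenever $v_n \in V_i$. Player~$0$ wins $(\mathcal{A}, \mathrm{Win})$ (with $\sigma$) if all plays consistent with $\sigma$ lie in $\mathrm{Win}$. A memory structure $\mathcal{M} = (M, m_I, \mathrm{Upd})$ has a finite set $M$ of states, initial state $m_I$, update $\mathrm{Upd} \colon M \times E \to M$, extended by $\mathrm{Upd}^+(v_0) = m_I$, $\mathrm{Upd}^+(v_0\cdots v_n v_{n+1}) = \mathrm{Upd}(\mathrm{Upd}^+(v_0\cdots v_n),(v_n,v_{n+1}))$; with a next-move function $\mathrm{Nxt} \colon V_0 \times M \to V$ (with $(v,\mathrm{Nxt}(v,m))\in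 E$) it induces the strategy $\sigma(v_0\cdots v_k) = \mathrm{Nxt}(v_k, \mathrm{Upd}^+(v_0\cdots v_k))$; such a strategy is finite-state of size $|M|$. A recharge weight function $w \colon E \to -\mathbb{N} \cup \{\mathrm{R}\}$ labels each edge with a non-positive integer or the recharge action $\mathrm{R}$. For a finite path $x$ without $\mathrm{R}$-edges, $\mathrm{EL}(x)$ is the sum of its edge weights. $\mathrm{EL}_{cap}(v_0\cdots v_k) = cap + \mathrm{EL}(x)$ where $x$ is the longest suffix of $v_0\cdots v_k$ containing no $\mathrm{R}$-edge. $\mathsf{Recharge}(w,cap) = \{v_0 v_1 \cdots \mid \forall k.\ \mathrm{EL}_{cap}(v_0\cdots v_k) \ge 0\}$. *)

From mathcomp Require Import all_boot all_order all_algebra.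
Set Implicit Arguments. Unset Strict Implicit. Unset Printing Implicit Defensive.
Import GRing.Theory Num.Theory.

(* Arena over a finite vertex type V: V0 : pred V is Player 0's vertices
   (V1 is its complement), E : rel V is the edge relation, vI the initial
   vertex.  Every vertex must have a successor. *)
Definition arena_total (V : finType) (E : rel V) : Prop :=
  forall v, exists v', E v v'.

Definition is_play (V : finType) (E : rel V) (vI : V) (p : nat -> V) : Prop :=
  p 0 = vI /\ forall k, E (p k) (p k.+1).

(* A strategy for Player 0: sigma x v is the move after history x ++ [:: v]
   (v the current vertex); it must follow an edge whenever v \in V0. *)
Definition strategy (V : finType) := seq V -> V -> V.

Definition valid_strategy (V : finType) (V0 : pred V) (E : rel V)
  (sigma : strategy V) : Prop :=
  forall x v, v \in V0 -> E v (sigma x v).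

Definition consistent (V : finType) (V0 : pred V) (sigma : strategy V)
  (p : nat -> V) : Prop :=
  forall n, p n \in V0 -> p n.+1 = sigma [seq p i | i <- iota 0 n] (p n).

Definition wins_with (V : finType) (V0 : pred V) (E : rel V) (vI : V)
  (Win : (nat -> V) -> Prop) (sigma : strategy V) : Prop :=
  valid_strategy V0 E sigma /\
  forall p, is_play E vI p -> consistent V0 sigma p -> Win p.

Definition wins (V : finType) (V0 : pred V) (E : rel V) (vI : V)
  (Win : (nat -> V) -> Prop) : Prop :=
  exists sigma, wins_with V0 E vI Win sigma.

(* Recharge weights: w u v = None is the recharge action R,
   w u v = Some d is the (non-positive) integer weight -d. *)
Definition rweight (V : finType) := V -> V -> option nat.

(* EL_cap of the prefix p 0 ... p k: cap plus the sum of the weights on the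
   longest suffix without R-edge (computed incrementally: an R-edge resets
   the level to cap, an integer edge adds its weight). *)
Fixpoint ELcap (V : finType) (w : rweight V) (cap : nat) (p : nat -> V)
  (k : nat) : int :=
  match k with
  | 0 => cap%:Z
  | k'.+1 => match w (p k') (p k) with
             | None => cap%:Z
             | Some d => (ELcap w cap p k' - d%:Z)%R
             end
  end.

Definition Recharge (V : finType) (w : rweight V) (cap : nat) :
  (nat -> V) -> Prop :=
  fun p => forall k, (0 <= ELcap w cap p k)%R.

(* W: largest absolute value of an integer weight on an edge (0 if none). *)
Definition maxW (V : finType) (E : rel V) (w : rweight V) : nat :=
  \max_(e : V * V | E e.1 e.2)
     (match w e.1 e.2 with Some d => d | None => 0 end).

Fixpoint upd_go (V : finType) (M : Type) (upd : M -> V -> V -> M)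
  (m : M) (prev : V) (s : seq V) : M :=
  match s with
  | [::] => m
  | v :: s' => upd_go upd (upd m prev v) v s'
  end.

(* Upd^+ of v0 v1 ... vn (with Upd^+ of the empty sequence set to mI,
   which is never used). *)
Definition upd_plus (V : finType) (M : Type) (mI : M) (upd : M -> V -> V -> M)
  (s : seq V) : M :=
  match s with
  | [::] => mI
  | v0 :: s' => upd_go upd mI v0 s'
  end.

Definition mem_strategy (V : finType) (M : Type) (mI : M)
  (upd : M -> V -> V -> M) (nxt : V -> M -> V) : strategy V :=
  fun x v => nxt v (upd_plus mI upd (rcons x v)).

From mathcomp Require Import all_boot all_order all_algebra.
From mathcomp Require Import zify.
From Stdlib Require Import ClassicalEpsilon.
Set Implicit Arguments. Unset Strict Implicit. Unset Printing Implicit Defensive.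
Import GRing.Theory Num.Theory.

(* Fix a strategy sigma winning Recharge(w, c) and, for every vertex v that
   some sigma-play visits, let l(v) be the least energy level with which a
   sigma-play visits v.  Continuing a play that reaches v with level l(v),
   sigma moves to some u with l(u) + d <= l(v) along an edge of weight -d
   (no constraint after a recharge); at a Player 1 vertex every edge has this
   property, since the opponent's move can be appended to a minimal prefix
   before sigma takes over again.  The positional strategy that always takes
   such a "level edge" stays among visited vertices, and along its plays the
   rank potential W * #{x | l(x) < l(v)} <= (n - 1) W drops by at least d on
   every edge of weight -d: when d > 0, l drops strictly and the rank by at
   least one.  Hence energy (n - 1) W, and a fortiori 3 (n - 1) W, suffices,
   and a positional strategy is a finite-state strategy of any size. *)

Definition classicb (P : Prop) : bool :=
  if excluded_middle_informative P then true else false.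

Lemma classicbP (P : Prop) : reflect P (classicb P).
Proof. by rewrite /classicb; case: excluded_middle_informative => H; constructor. Qed.

Definition some_succ (V : finType) (E : rel V) (v : V) : V :=
  odflt v [pick u | E v u].

Lemma some_succP (V : finType) (E : rel V) (v : V) :
  arena_total E -> E v (some_succ E v).
Proof.
move=> Htot; rewrite /some_succ; case: pickP => [u //|none].
by have [u Hu] := Htot v; move: (none u); rewrite Hu.
Qed.

Lemma weight_le_maxW (V : finType) (E : rel V) (w : rweight V) v u d :
  E v u -> w v u = Some d -> d <= maxW E w.
Proof.
move=> Hvu Hw.
have := @leq_bigmax_cond _ (fun e : V * V => E e.1 e.2)
  (fun e : V * V => if w e.1 e.2 is Some x then x else 0) (v, u) Hvu.
by rewrite /= Hw.
Qed.

Section PlayExtension.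

Variables (V : finType) (V0 : pred V) (E : rel V) (sigma : strategy V).
Variables (pre : nat -> V) (K : nat).

Definition ext_move (h : seq V) (v : V) (n : nat) : V :=
  if n < K then pre n.+1
  else if v \in V0 then sigma h v else some_succ E v.

Fixpoint ext_history (n : nat) : seq V * V :=
  match n with
  | 0 => ([::], pre 0)
  | n'.+1 => let hv := ext_history n' in
             (rcons hv.1 hv.2, ext_move hv.1 hv.2 n')
  end.

Definition ext_play (n : nat) : V := (ext_history n).2.

Lemma ext_history_fst n :
  (ext_history n).1 = [seq ext_play i | i <- iota 0 n].
Proof.
elim: n => [//|n IH].
by rewrite -[X in iota 0 X]addn1 iotaD map_cat cats1 -IH.
Qed.

Lemma ext_play_prefix n : n <= K -> ext_play n = pre n.
Proof. by case: n => [//|n] HnK; rewrite /ext_play /= /ext_move HnK. Qed.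

Lemma ext_play_succ n : K <= n ->
  ext_play n.+1 = if ext_play n \in V0
                  then sigma [seq ext_play i | i <- iota 0 n] (ext_play n)
                  else some_succ E (ext_play n).
Proof. by move=> HKn; rewrite /ext_play /= ext_history_fst /ext_move ltnNge HKn. Qed.

Variable vI : V.
Hypotheses (Htot : arena_total E) (Hval : valid_strategy V0 E sigma).
Hypothesis pre_init : pre 0 = vI.
Hypothesis pre_edge : forall i, i < K -> E (pre i) (pre i.+1).
Hypothesis pre_consistent : forall i, i < K -> pre i \in V0 ->
  pre i.+1 = sigma [seq pre j | j <- iota 0 i] (pre i).

Lemma extend_prefix : exists q,
  [/\ is_play E vI q, consistent V0 sigma q & forall i, i <= K -> q i = pre i].
Proof.
exists ext_play; split; last exact: ext_play_prefix.
- split; first by rewrite ext_play_prefix.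
  move=> n; case: (ltnP n K) => HnK.
    by rewrite !ext_play_prefix //; [exact: pre_edge | exact: ltnW].
  rewrite ext_play_succ //; case: ifP => HV0; first exact: Hval.
  exact: some_succP.
- move=> n; case: (ltnP n K) => HnK; last by rewrite ext_play_succ // => ->.
  rewrite !ext_play_prefix ?(ltnW HnK) // => /(pre_consistent HnK) ->.
  congr (sigma _ _); apply/eq_in_map => i; rewrite mem_iota add0n => Hin.
  by rewrite ext_play_prefix // ltnW // (ltn_trans Hin).
Qed.

End PlayExtension.

Lemma eq_ELcap (V : finType) (w : rweight V) (cap : nat) (p q : nat -> V) k :
  (forall i, i <= k -> p i = q i) -> ELcap w cap p k = ELcap w cap q k.
Proof.
elim: k => [//|k IH] Hpq /=.
rewrite (Hpq k (leqnSn k)) (Hpq k.+1 (leqnn _)) IH // => i Hi.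
by apply: Hpq; apply: leq_trans Hi _.
Qed.

Lemma ELcap_le_cap (V : finType) (w : rweight V) (cap : nat) (p : nat -> V) k :
  (ELcap w cap p k <= cap%:Z)%R.
Proof. by elim: k => [|k IH] //=; case: (w _ _) => [d|] //; lia. Qed.

Lemma Recharge_of_potential (V : finType) (w : rweight V) (cap : nat)
    (g : V -> nat) (p : nat -> V) :
  (forall k, g (p k) <= cap) ->
  (forall k, if w (p k) (p k.+1) is Some d then g (p k.+1) + d <= g (p k)
             else true) ->
  Recharge w cap p.
Proof.
move=> g_cap g_step.
suff g_le_EL k : (Posz (g (p k)) <= ELcap w cap p k)%R by move=> k; have := g_le_EL k; lia.
elim: k => [|k IH] /=; first by have := g_cap 0; lia.
by move: (g_step k); case: (w _ _) => [d|] Hd; [lia | have := g_cap k.+1; lia].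
Qed.

Section RankPotential.

Variables (V : finType) (D : pred V) (l : V -> nat) (W : nat).

Definition rank_potential (v : V) : nat := W * #|[set x | D x && (l x < l v)]|.

Lemma rank_potential_le v : rank_potential v <= W * (#|V| - 1).
Proof.
rewrite leq_mul2l subn1 -(cardsC1 v); apply/orP; right.
apply: subset_leq_card; apply/subsetP => x; rewrite !inE => /andP [_ lt_xv].
by apply: contraTneq lt_xv => ->; rewrite ltnn.
Qed.

(* A drop of d > 0 in l puts u below v, so the rank grows by at least one. *)
Lemma rank_potential_drop u v d :
  D u -> l u + d <= l v -> d <= W -> rank_potential u + d <= rank_potential v.
Proof.
move=> Du le_uv le_dW.
have below_u_v : [set x | D x && (l x < l u)] \subset [set x | D x && (l x < l v)].
  apply/subsetP => x; rewrite !inE => /andP [-> lt_xu] /=.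
  by apply: (leq_trans lt_xu); apply: leq_trans le_uv; apply: leq_addr.
case: d le_uv le_dW => [|d] le_uv le_dW.
  by rewrite addn0 leq_mul2l (subset_leq_card below_u_v) orbT.
have : u |: [set x | D x && (l x < l u)] \subset [set x | D x && (l x < l v)].
  by rewrite subUset below_u_v andbT sub1set inE Du /=; lia.
move/subset_leq_card; rewrite cardsU1 inE ltnn andbF /rank_potential.
by move: (#|_|) (#|_|) => n1 n2; nia.
Qed.

End RankPotential.

Section MinimalLevels.

Variables (V : finType) (V0 : pred V) (E : rel V) (vI : V) (w : rweight V).
Variables (sigma : strategy V) (c : nat).
Hypotheses (Htot : arena_total E)
           (Hwin : wins_with V0 E vI (Recharge w c) sigma).

Definition reachable (v : V) (e : nat) : Prop :=
  exists p, [/\ is_play E vI p, consistent V0 sigma p &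
    exists k, p k = v /\ ELcap w c p k = Posz e].

Definition visited (v : V) : bool :=
  has (fun e => classicb (reachable v e)) (iota 0 c.+1).

(* c.+1 when no sigma-play visits v. *)
Definition min_level (v : V) : nat :=
  find (fun e => classicb (reachable v e)) (iota 0 c.+1).

Lemma reachable_visited v e : reachable v e -> visited v /\ min_level v <= e.
Proof.
move=> Hve; have le_ec : e <= c.
  by case: Hve => p [_ _ [k [_ Hk]]]; have := ELcap_le_cap w c p k; lia.
have He : classicb (reachable v e) by apply/classicbP.
split; first by apply/hasP; exists e; rewrite // mem_iota.
rewrite leqNgt; apply/negP => /(before_find 0).
by rewrite nth_iota // add0n He.
Qed.

Lemma visited_min_level v : visited v -> reachable v (min_level v).
Proof.
move=> Hv; have := nth_find 0 Hv.
rewrite nth_iota ?add0n => [/classicbP //|].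
by rewrite -[X in _ < X](size_iota 0) -has_find.
Qed.

Lemma visited_init : visited vI.
Proof.
have := @extend_prefix _ V0 E sigma (fun=> vI) 0 vI Htot Hwin.1 erefl.
case=> // p [Hp Hc _].
by apply: (proj1 (reachable_visited (e := c) _)); exists p; split => //; exists 0; case: Hp.
Qed.

Definition level_edge (v u : V) : bool :=
  visited u &&
  (if w v u is Some d then min_level u + d <= min_level v else true).

Lemma level_edge_at p k :
  is_play E vI p -> consistent V0 sigma p ->
  ELcap w c p k = Posz (min_level (p k)) -> level_edge (p k) (p k.+1).
Proof.
move=> Hp Hc Hk; have Hk1 := Hwin.2 p Hp Hc k.+1.
have [Hvis le_min] : visited (p k.+1) /\ min_level (p k.+1) <= `|ELcap w c p k.+1|%N.
  by apply: reachable_visited; exists p; split => //; exists k.+1; split => //; lia.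
rewrite /level_edge Hvis; move: Hk1 le_min => /=.
by case: (w _ _) => [d|] //; lia.
Qed.

Lemma visited_level_edge v : visited v -> exists2 u, E v u & level_edge v u.
Proof.
move=> /visited_min_level [p [Hp Hc [k [<- Hk]]]].
by exists (p k.+1); [exact: Hp.2 | exact: level_edge_at].
Qed.

(* Append the opponent's move to a prefix reaching v with level l(v) and let
   sigma continue: the level at v is unchanged, so level_edge_at applies. *)
Lemma opponent_level_edge v u :
  v \notin V0 -> visited v -> E v u -> level_edge v u.
Proof.
move=> Hv /visited_min_level [p [Hp Hc [k [Hpk Hk]]]] Hvu.
pose pre i := if i <= k then p i else u.
have pre_p i : i <= k -> pre i = p i by rewrite /pre => ->.
have pre_u : pre k.+1 = u by rewrite /pre ltnn.
have pre_edge i : i < k.+1 -> E (pre i) (pre i.+1).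
  rewrite ltnS leq_eqVlt => /orP [/eqP ->|lt_ik]; first by rewrite pre_u pre_p ?Hpk.
  by rewrite !pre_p //; [exact: Hp.2 | exact: ltnW].
have pre_cons i : i < k.+1 -> pre i \in V0 ->
    pre i.+1 = sigma [seq pre j | j <- iota 0 i] (pre i).
  rewrite ltnS leq_eqVlt => /orP [/eqP ->|lt_ik].
    by rewrite pre_p // Hpk (negbTE Hv).
  rewrite !pre_p ?(ltnW lt_ik) // => /Hc ->; congr (sigma _ _).
  apply/eq_in_map => j; rewrite mem_iota add0n => lt_ji.
  by rewrite pre_p // ltnW // (ltn_trans lt_ji).
have [q [Hq Hcq q_pre]] :=
  extend_prefix Htot Hwin.1 (etrans (pre_p 0 (leq0n k)) Hp.1) pre_edge pre_cons.
have q_p i : i <= k -> q i = p i by move=> Hi; rewrite q_pre ?pre_p // (leq_trans Hi).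
have <- : q k = v by rewrite q_p.
have <- : q k.+1 = u by rewrite q_pre.
by apply: level_edge_at; rewrite // (eq_ELcap w c q_p) Hk q_p // Hpk.
Qed.

Definition descend (v : V) : V :=
  odflt (some_succ E v) [pick u | E v u && level_edge v u].

Lemma descend_edge v : E v (descend v).
Proof. by rewrite /descend; case: pickP => [u /andP [] //|_]; exact: some_succP. Qed.

Lemma descend_level_edge v : visited v -> level_edge v (descend v).
Proof.
move=> /visited_level_edge [u Hvu Hlev]; rewrite /descend.
by case: pickP => [u' /andP [] //|none]; move: (none u); rewrite Hvu Hlev.
Qed.

Lemma descend_plays_level_edges p :
  is_play E vI p -> (forall n, p n \in V0 -> p n.+1 = descend (p n)) ->
  forall k, visited (p k) /\ level_edge (p k) (p k.+1).
Proof.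
move=> Hp Hdesc.
have step k : visited (p k) -> level_edge (p k) (p k.+1).
  case: (boolP (p k \in V0)) => HV0 Hvis; first by rewrite Hdesc //; exact: descend_level_edge.
  exact: opponent_level_edge (Hp.2 k).
suff vis k : visited (p k) by move=> k; split; [exact: vis | exact: step].
elim: k => [|k IH]; first by rewrite Hp.1; exact: visited_init.
by case/andP: (step k IH).
Qed.

End MinimalLevels.

Theorem corollary2 (V : finType) (V0 : pred V) (E : rel V) (vI : V)
  (w : rweight V) :
  arena_total E ->
  (exists cap : nat, wins V0 E vI (Recharge w cap)) ->
  exists (M : finType) (mI : M) (upd : M -> V -> V -> M) (nxt : V -> M -> V),
    #|M| = 3 /\
    (forall v m, v \in V0 -> E v (nxt v m)) /\
    wins_with V0 E vI (Recharge w (3 * (#|V| - 1) * maxW E w))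
      (mem_strategy mI upd nxt).
Proof.
move=> Htot [c [sigma Hwin]].
pose desc := descend V0 E vI w sigma c.
have desc_edge v : E v (desc v) by apply: descend_edge.
(* The strategy is positional: its three memory states are never updated. *)
exists 'I_3, ord0, (fun m _ _ => m), (fun v _ => desc v).
split; first by rewrite card_ord.
split; first by move=> v m _; apply: desc_edge.
split; first by move=> x v _; apply: desc_edge.
move=> p Hp Hc; have Hlev := descend_plays_level_edges Htot Hwin Hp Hc.
apply: (@Recharge_of_potential _ _ _
  (rank_potential (visited V0 E vI w sigma c) (min_level V0 E vI w sigma c) (maxW E w))) => [k|k].
  by apply: leq_trans (rank_potential_le _ _ _ _) _; rewrite mulnC leq_mul2r leq_pmull ?orbT.
have [_ /andP [vis_next]] := Hlev k; case Hw: (w _ _) => [d|] // le_level.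
by apply: rank_potential_drop => //; apply: weight_le_maxW Hw; apply: Hp.2.
Qed.
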